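(* Let $p(x,y)\not\equiv0$ be a real polynomial with $p(0,0)=0$, $\nabla p(0,0)=(0,0)$, such that every main $A'$-quasi-homogeneous form of $p$ ($A'\in\mathbb{N}^2$) consisting of one or two terms is nonnegative on $\mathbb{R}^2$ and nondegenerate in the weak sense. Let $A=(A_1,A_2)\in\mathcal{A}_p$ and suppose the exponent vectors $k$ of $p$ take exactly two values $B_1^A<B_2^A$ of $\langle A,k\rangle$, so that $p=\varphi_1^A+\varphi_2^A$. Suppose there is $u_0\in U_p(A)$ which is a root of $g_1^A$ of even multiplicity $k\ge2$ and a root of $g_2^A$ of multiplicity exactly $1$. Then $(0,0)$ is not a point of local minimum of $p$.
   Context: $\mathbb{N}=\{1,2,\dots\}$; $\mathbb{N}_0^2$ is the set of $(A_1,A_2)\in\mathbb{N}^2$ with $\gcd(A_1,A_2)=1$. $N_p$ is the support of $p$. For $A'\in\mathbb{N}^2$, the main $A'$-quasi-homogeneous form of $p$ is the sum of the terms of $p$ whose exponent vectors $k$ minimize $\langle A',k\rangle$ over $N_p$. A function $f$ is nondegenerate in the weak sense if $f(x,y)\ne0$ whenever $x\ne0,y\ne0$. For $A\in\mathbb{N}_0^2$, $\varphi_j^A$ is the sum of terms of $p$ with $\langle A,k\rangle=B_j^A$ ($B_1^A<B_2^A<\dots$ the distinct values on $N_p$), so $\varphi_1^A$ is the main $A$-form. For such a form $\sum_ic_ix^{\gamma_i}y^{\delta_i}$ ($c_i\ne0$, $\gamma_1>\gamma_2>\dots$) the characteristic polynomial is $\sum_ic_iu^{(\gamma_1-\gamma_i)/A_2}$;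 $g_1^A,g_2^A$ are those of $\varphi_1^A,\varphi_2^A$. $\mathcal{A}_p$ is the set of $A\in\mathbb{N}_0^2$ such that $\varphi_1^A$ has at least three terms, $g_1^A\ge0$ on $\mathbb{R}$, and $g_1^A$ has a real root; $U_p(A)$ is the set of real roots of $g_1^A$. Local minimum at $(0,0)$ means $p\ge p(0,0)$ near $(0,0)$. *)

From mathcomp Require Import all_boot all_algebra.
From mathcomp Require Import reals.
From mathcomp Require Export mpoly.
Set Implicit Arguments. Unset Strict Implicit. Unset Printing Implicit Defensive.
Import GRing.Theory Num.Theory.
Local Open Scope ring_scope.

Definition ix : 'I_2 := ord0.
Definition iy : 'I_2 := ord_max.

Section Defs.
Variable R : realType.

Definition ev (p : {mpoly R[2]}) (x y : R) : R :=
  p.@[fun i : 'I_2 => if i == ix then x else y].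

Definition nterms (p : {mpoly R[2]}) : nat := size (msupp p).

Definition wdeg (A : nat * nat) (k : 'X_{1..2}) : nat :=
  (A.1 * k ix + A.2 * k iy)%N.

Definition qform (A : nat * nat) (b : nat) (p : {mpoly R[2]}) : {mpoly R[2]} :=
  \sum_(k <- msupp p | wdeg A k == b) p@_k *: 'X_[k].

(* B_1^A < B_2^A < ... : the distinct values of <A,k> on N_p, listed
   increasingly (0-indexed: Bs A p)`_0 = B_1^A). *)
Definition Bs (A : nat * nat) (p : {mpoly R[2]}) : seq nat :=
  sort leq (undup [seq wdeg A k | k <- msupp p]).

Definition phi (A : nat * nat) (j : nat) (p : {mpoly R[2]}) : {mpoly R[2]} :=
  qform A (nth 0%N (Bs A p) j.-1) p.

Definition main_form (A : nat * nat) (p : {mpoly R[2]}) : {mpoly R[2]} :=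
  phi A 1 p.

(* A in N^2 *)
Definition posvec (A : nat * nat) : bool := (0 < A.1)%N && (0 < A.2)%N.
Definition N0vec (A : nat * nat) : bool := posvec A && coprime A.1 A.2.

(* characteristic polynomial of a quasi-homogeneous form
   sum_i c_i x^gamma_i y^delta_i : sum_i c_i u^((gamma_1 - gamma_i)/A_2)
   where gamma_1 is the largest x-exponent. *)
Definition charpoly2 (A : nat * nat) (f : {mpoly R[2]}) : {poly R} :=
  let g1 := \max_(k <- msupp f) k ix in
  \sum_(k <- msupp f) f@_k *: 'X^((g1 - k ix) %/ A.2).

Definition g (A : nat * nat) (j : nat) (p : {mpoly R[2]}) : {poly R} :=
  charpoly2 A (phi A j p).

Definition nonneg2 (f : {mpoly R[2]}) : Prop := forall x y : R, 0 <= ev f x y.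

Definition nondeg_weak (f : {mpoly R[2]}) : Prop :=
  forall x y : R, x != 0 -> y != 0 -> ev f x y != 0.

Definition in_calA (p : {mpoly R[2]}) (A : nat * nat) : Prop :=
  [/\ N0vec A, (3 <= nterms (phi A 1 p))%N,
      (forall u : R, 0 <= (g A 1 p).[u]) & exists u : R, root (g A 1 p) u].

Definition U (p : {mpoly R[2]}) (A : nat * nat) (u : R) : Prop := root (g A 1 p) u.

Definition local_min0 (p : {mpoly R[2]}) : Prop :=
  exists2 e : R, 0 < e & forall x y : R, `|x| < e -> `|y| < e -> ev p 0 0 <= ev p x y.

End Defs.

(* Write p = phi1 + phi2 with phij quasi-homogeneous of A-degree Bj, and pick x0 = +-1
   and w0 with x0^A2 w0^A1 = u0 (possible because A1 and A2 are coprime).  Along the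
   curves x = x0 t^A1, y = w t^A2 one has p = t^B1 phi1(x0, w) + t^B2 phi2(x0, w), and up
   to a monomial factor phij(x0, w) = gj(x0^A2 w^A1); hence w0 is a root of multiplicity
   at least 2 of phi1(x0, .) and a simple root of phi2(x0, .).  Moving w away from w0 by
   -k c t^(B2 - B1), with c = d/dw phi2(x0, w0) <> 0 and k > 0 small, makes both terms of
   order t^(B1 + 2 (B2 - B1)) with a negative total coefficient, so p takes negative
   values arbitrarily close to the origin. *)

From mathcomp Require Import all_boot all_algebra.
From mathcomp Require Import order reals mpoly polyrcf.
From mathcomp Require Import ring lra zify.
Set Implicit Arguments. Unset Strict Implicit. Unset Printing Implicit Defensive.
Import Order.TTheory GRing.Theory Num.Theory.
Local Open Scope ring_scope.

Section RootsOfComposition.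
Variable F : fieldType.
Implicit Types (G P Q r : {poly F}) (u w : F).

Lemma horner_deriv_mul_root P Q w :
  root Q w -> (P * Q)^`().[w] = P.[w] * Q^`().[w].
Proof. by move=> /eqP Qw; rewrite derivM hornerD !hornerM Qw mulr0 add0r. Qed.

Lemma mup0 u : mup u (0 : {poly F}) = 0%N.
Proof.
have : (mup u 0%R < (size (0 : {poly F})%R).+1)%N by exact: ltn_ord.
by rewrite size_poly0; case: (mup u 0%R).
Qed.

Lemma mup_eq1_deriv_neq0 G u : mup u G = 1%N -> G^`().[u] != 0.
Proof.
move=> Gu; have G_nz : G != 0 by apply: contra_eq_neq Gu => ->; rewrite mup0.
have [m [q q_u G_eq]] := multiplicity_XsubC G u; rewrite G_nz /= in q_u.
rewrite G_eq mupMr // mup_XsubCX eqxx in Gu.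
rewrite G_eq Gu expr1 horner_deriv_mul_root ?root_XsubC //.
by rewrite derivXsubC hornerC mulr1.
Qed.

Lemma dvdp_comp_XsubC_exp G r u w n :
  ('X - u%:P) ^+ n %| G -> r.[w] = u -> ('X - w%:P) ^+ n %| G \Po r.
Proof.
move=> /dvdpP[q ->] rw; rewrite comp_polyM dvdp_mull // rmorphXn /=.
rewrite comp_polyB comp_polyX comp_polyC dvdp_exp2r // dvdp_XsubCl.
by rewrite /root hornerD hornerN hornerC rw subrr.
Qed.

End RootsOfComposition.

Section SignedRoots.
Variable R : rcfType.

Lemma exists_pos_rootn (c : R) n :
  0 < c -> (0 < n)%N -> exists2 r : R, 0 < r & r ^+ n = c.
Proof.
move=> c_gt0 n_gt0; set P := 'X^n - c%:P.
have P_c1 : 0 <= P.[c + 1].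
  rewrite !hornerE subr_ge0 (le_trans _ (ler_eXnr n_gt0 _)); lra.
have [r] : exists2 r, r \in `[0, c + 1] & root P r.
  apply: poly_ivt; first by rewrite addr_ge0 ?ltW.
  by rewrite P_c1 andbT !hornerE expr0n gtn_eqF // sub0r oppr_le0 ltW.
rewrite in_itv /= => /andP[r_ge0 _].
rewrite /root !hornerE subr_eq0 => /eqP r_n; exists r => //.
rewrite lt_neqAle r_ge0 andbT eq_sym; apply: contra_eq_neq r_n => ->.
by rewrite expr0n gtn_eqF // eq_sym lt0r_neq0.
Qed.

Lemma exists_sign_root (a1 a2 : nat) (u : R) :
  coprime a1 a2 -> (0 < a1)%N -> u != 0 ->
  exists x0 w0 : R, x0 ^+ 2 = 1 /\ x0 ^+ a2 * w0 ^+ a1 = u.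
Proof.
move=> co a1_gt0 u_nz; have normu_gt0 : 0 < `|u| by rewrite normr_gt0.
have [r _ r_a1] := exists_pos_rootn normu_gt0 a1_gt0.
have [u_lt0|u_gt0|u0] := ltgtP u 0; last by rewrite u0 eqxx in u_nz.
- have [a1_odd|a1_even] := boolP (odd a1).
    exists 1, (- r); rewrite !expr1n mul1r exprNn -signr_odd a1_odd r_a1.
    by rewrite ltr0_norm // mulN1r opprK.
  have a2_odd : odd a2.
    apply: contraLR co => a2_even; rewrite /coprime.
    apply/negP => /eqP gcd1; move: (dvdn_gcd 2 a1 a2).
    by rewrite gcd1 !dvdn2 a1_even a2_even.
  exists (-1), r; rewrite sqrrN expr1n -signr_odd a2_odd r_a1.
  by rewrite ltr0_norm // mulN1r opprK.
- by exists 1, r; rewrite !expr1n mul1r r_a1 gtr0_norm.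
Qed.

End SignedRoots.

Lemma eq_bigmax_seq (T : eqType) (s : seq T) (F : T -> nat) :
  s != [::] -> exists2 k, k \in s & \max_(i <- s) F i = F k.
Proof.
elim: s => [//|a s IHs] _; rewrite big_cons.
have [->|/IHs[k ks ->]] := eqVneq s [::].
  by exists a; rewrite ?mem_head // big_nil maxn0.
have [Fka|Fak] := leqP (F k) (F a).
  by exists a; rewrite ?mem_head //; apply/maxn_idPl.
by exists k; rewrite ?inE ?ks ?orbT //; apply/maxn_idPr/ltnW.
Qed.

Lemma coprime_weighted_eq (a1 a2 x0 y0 x y : nat) :
  coprime a1 a2 -> (0 < a2)%N -> (x <= x0)%N ->
  (a1 * x + a2 * y = a1 * x0 + a2 * y0)%N ->
  (x + a2 * ((x0 - x) %/ a2) = x0)%N /\ (y = y0 + a1 * ((x0 - x) %/ a2))%N.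
Proof.
move=> co a2_gt0 le_x_x0 eq_w.
have le_a1x : (a1 * x <= a1 * x0)%N by rewrite leq_mul2l le_x_x0 orbT.
have le_y : (y0 <= y)%N by rewrite -(leq_pmul2l a2_gt0); lia.
have lin : (a1 * (x0 - x) = a2 * (y - y0))%N by rewrite !mulnBr; lia.
have /divnK m_eq : (a2 %| x0 - x)%N.
  by rewrite -(@Gauss_dvdr _ a1) 1?coprime_sym // lin dvdn_mulr.
set m := ((x0 - x) %/ a2)%N in m_eq *; split; first by rewrite mulnC m_eq subnKC.
suff : (a2 * (y - y0) = a2 * (a1 * m))%N by move/eqP; rewrite eqn_pmul2l //; lia.
by rewrite -lin -m_eq mulnA mulnC.
Qed.

Lemma eq_mnm2 (k k' : 'X_{1..2}) : k ix = k' ix -> k iy = k' iy -> k = k'.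
Proof.
move=> eq_x eq_y; apply/mnmP => -[[|[|//]] i_lt].
- by have -> : Ordinal i_lt = ix by apply/val_inj.
- by have -> : Ordinal i_lt = iy by apply/val_inj.
Qed.

Section QuasiHomogeneousForms.
Variable R : realType.
Implicit Types (p f : {mpoly R[2]}) (A : nat * nat).

Lemma ev_sum p x y :
  ev p x y = \sum_(k <- msupp p) p@_k * (x ^+ k ix * y ^+ k iy).
Proof.
rewrite /ev mevalE; apply: eq_bigr => k _; rewrite big_ord_recl big_ord1 /=.
by have -> : (lift ord0 ord0 : 'I_2) = iy by apply/val_inj.
Qed.

Lemma evD p q x y : ev (p + q) x y = ev p x y + ev q x y.
Proof. exact: mevalD. Qed.

Definition qhomog A (B : nat) f : Prop := {in msupp f, forall k, wdeg A k = B}.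

Lemma qform_qhomog A B p : qhomog A B (qform A B p).
Proof.
move=> k /msupp_sum_le/flattenP[s /mapP[i]].
rewrite mem_filter => /andP[/eqP <- _] ->.
by move=> /msuppZ_le; rewrite msuppX mem_seq1 => /eqP ->.
Qed.

Lemma qform_split A B1 B2 p : B1 != B2 ->
  {in msupp p, forall k, wdeg A k = B1 \/ wdeg A k = B2} ->
  p = qform A B1 p + qform A B2 p.
Proof.
move=> neqB wdegB; rewrite {1}[p]mpolyE (bigID (fun k => wdeg A k == B1)) /=.
congr (_ + _); rewrite /qform big_seq_cond [RHS]big_seq_cond; apply: eq_bigl => k.
case: (boolP (k \in msupp p)) => //= /wdegB[]->; first by rewrite eqxx (negbTE neqB).
by rewrite eqxx eq_sym (negbTE neqB).
Qed.

Lemma ev_qhomog_scale A B f x y t : qhomog A B f ->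
  ev f (x * t ^+ A.1) (y * t ^+ A.2) = t ^+ B * ev f x y.
Proof.
move=> f_qh; rewrite !ev_sum mulr_sumr; apply: eq_big_seq => k /f_qh <-.
by rewrite /wdeg !exprMn -!exprM exprD; ring.
Qed.

Lemma Bs_size2 A p : size (Bs A p) = 2%N ->
  exists B1 B2, [/\ Bs A p = [:: B1; B2], (B1 < B2)%N &
    {in msupp p, forall k, wdeg A k = B1 \/ wdeg A k = B2}].
Proof.
have sorted_Bs : sorted leq (Bs A p) by apply: sort_sorted; exact: leq_total.
have uniq_Bs : uniq (Bs A p) by rewrite /Bs sort_uniq undup_uniq.
have wdeg_Bs k : k \in msupp p -> wdeg A k \in Bs A p.
  by move=> k_p; rewrite /Bs mem_sort mem_undup map_f.
move: sorted_Bs uniq_Bs wdeg_Bs.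
case: (Bs A p) => [|B1 [|B2 []]] //= le_B12 neq_B12 wdeg_Bs _.
exists B1, B2; split => //.
  by rewrite ltn_neqAle; move: neq_B12 le_B12; rewrite inE andbT => -> /andP[].
by move=> k /wdeg_Bs; rewrite !inE => /orP[] /eqP ->; [left | right].
Qed.

End QuasiHomogeneousForms.

Section CharacteristicPolynomial.
Variables (R : realType) (A : nat * nat) (B : nat) (f : {mpoly R[2]}).
Hypotheses (coA : coprime A.1 A.2) (A2_gt0 : (0 < A.2)%N) (f_qh : qhomog A B f).
Local Notation gam := (\max_(k <- msupp f) k ix).

Lemma qhomog_exponents ks k :
  ks \in msupp f -> gam = ks ix -> k \in msupp f ->
  (k ix + A.2 * ((gam - k ix) %/ A.2) = gam)%N /\
  (k iy = ks iy + A.1 * ((gam - k ix) %/ A.2))%N.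
Proof.
move=> ks_f ks_max k_f; apply: coprime_weighted_eq => //.
  exact: (leq_bigmax_seq (F := fun k : 'X_{1..2} => k ix)).
by rewrite ks_max; exact: etrans (f_qh k_f) (esym (f_qh ks_f)).
Qed.

Lemma charpoly_horner0 ks :
  ks \in msupp f -> gam = ks ix -> (charpoly2 A f).[0] = f@_ks.
Proof.
move=> ks_f ks_max; rewrite /charpoly2 /= horner_sum (bigD1_seq ks) ?msupp_uniq //=.
rewrite hornerZ hornerXn ks_max subnn div0n expr0 mulr1 big1_seq ?addr0 //.
move=> k /andP[k_ks k_f]; rewrite hornerZ hornerXn.
have [] := qhomog_exponents ks_f ks_max k_f; rewrite ks_max.
case: (posnP ((ks ix - k ix) %/ A.2)) => [-> | m_gt0].
  rewrite !muln0 !addn0 => e_x e_y.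
  by move: k_ks; rewrite (eq_mnm2 e_x e_y) eqxx.
by rewrite expr0n gtn_eqF ?mulr0.
Qed.

Lemma ev_qhomog_charpoly ks x0 w :
  ks \in msupp f -> gam = ks ix -> x0 ^+ 2 = 1 ->
  ev f x0 w = x0 ^+ gam * w ^+ ks iy * (charpoly2 A f).[x0 ^+ A.2 * w ^+ A.1].
Proof.
move=> ks_f ks_max x0_sq; rewrite ev_sum /charpoly2 /= horner_sum mulr_sumr.
apply: eq_big_seq => k k_f; rewrite hornerZ hornerXn.
have [e_x e_y] := qhomog_exponents ks_f ks_max k_f.
set m := ((gam - k ix) %/ A.2)%N in e_x e_y *.
(* As x0 = +-1, the power x0^(-A2 m) hidden in the characteristic polynomial is x0^(A2 m). *)
have x0_sq_m : x0 ^+ (A.2 * m) * x0 ^+ (A.2 * m) = 1.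
  by rewrite -expr2 -exprM mulnC exprM x0_sq expr1n.
rewrite -{1}e_x e_y !exprD exprMn -!exprM -[LHS]mulr1 -x0_sq_m.
move: (x0 ^+ k ix) (x0 ^+ (A.2 * m)) (w ^+ ks iy) (w ^+ (A.1 * m)) f@_k.
by move=> a b c d e; ring.
Qed.

End CharacteristicPolynomial.

Section Slice.
Variable R : realType.
Implicit Types (f : {mpoly R[2]}) (A : nat * nat).

Definition slice A (B : nat) f (x0 : R) : {poly R} :=
  let gam := \max_(k <- msupp f) k ix in
  x0 ^+ gam *:
    ('X^((B - A.1 * gam) %/ A.2) * (charpoly2 A f \Po (x0 ^+ A.2 *: 'X^(A.1)))).

Lemma horner_slice A B f x0 w :
  coprime A.1 A.2 -> (0 < A.2)%N -> qhomog A B f -> x0 ^+ 2 = 1 ->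
  (slice A B f x0).[w] = ev f x0 w.
Proof.
move=> coA A2_gt0 f_qh x0_sq.
have [f0|] := eqVneq (msupp f) [::].
  by rewrite /slice /charpoly2 ev_sum f0 !big_nil comp_poly0 mulr0 scaler0 horner0.
move=> /(eq_bigmax_seq (fun k : 'X_{1..2} => k ix))[ks ks_f ks_max].
rewrite (ev_qhomog_charpoly coA A2_gt0 f_qh w ks_f ks_max) //= hornerZ hornerM.
rewrite hornerXn horner_comp hornerZ hornerXn mulrA ks_max -(f_qh _ ks_f).
by rewrite /wdeg addKn mulKn.
Qed.

Lemma dvdp_slice A B f x0 u w n :
  ('X - u%:P) ^+ n %| charpoly2 A f -> x0 ^+ A.2 * w ^+ A.1 = u ->
  ('X - w%:P) ^+ n %| slice A B f x0.
Proof.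
move=> dvd_u uw; rewrite /slice -mul_polyC mulrA dvdp_mull //.
by apply: dvdp_comp_XsubC_exp dvd_u _; rewrite hornerZ hornerXn.
Qed.

Lemma slice_deriv_neq0 A B f x0 u w :
  (0 < A.1)%N -> mup u (charpoly2 A f) = 1%N -> x0 ^+ A.2 * w ^+ A.1 = u ->
  x0 ^+ 2 = 1 -> u != 0 -> (slice A B f x0)^`().[w] != 0.
Proof.
move=> A1_gt0 mup_u uw x0_sq u_nz.
have x0_nz : x0 != 0 by apply: contra_eq_neq x0_sq => ->; rewrite expr0n eq_sym oner_neq0.
have w_nz : w != 0.
  by apply: contraNneq u_nz => w0; rewrite -uw w0 expr0n gtn_eqF ?mulr0.
have G_nz : charpoly2 A f != 0 by apply: contra_eq_neq mup_u => ->; rewrite mup0.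
have root_u : root (charpoly2 A f) u by rewrite -dvdp_XsubCl XsubC_dvd ?mup_u.
set r := x0 ^+ A.2 *: 'X^(A.1).
have r_w : r.[w] = u by rewrite hornerZ hornerXn.
have dr_w : r^`().[w] = x0 ^+ A.2 * (w ^+ A.1.-1 * A.1%:R).
  by rewrite derivZ derivXn hornerZ hornerMn hornerXn mulr_natr.
rewrite /slice /= derivZ hornerZ horner_deriv_mul_root /root ?horner_comp ?r_w //.
rewrite deriv_comp hornerM horner_comp r_w dr_w hornerXn.
by rewrite !mulf_neq0 ?expf_neq0 ?mup_eq1_deriv_neq0 // pnatr_eq0 -lt0n.
Qed.

End Slice.

Section NoLocalMinimum.
Variable R : realType.
Implicit Types (p : {mpoly R[2]}) (X Y Phi : {poly R}).

Lemma not_local_min0_curve p X Y Phi N :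
  ev p 0 0 = 0 -> X.[0] = 0 -> Y.[0] = 0 -> Phi.[0] < 0 ->
  (forall t, 0 < t -> ev p X.[t] Y.[t] = t ^+ N * Phi.[t]) ->
  ~ local_min0 p.
Proof.
move=> p00 X0 Y0 Phi0 p_curve [e e_gt0 min_e].
have [dX dX_gt0 near_X] := poly_cont 0 X e_gt0.
have [dY dY_gt0 near_Y] := poly_cont 0 Y e_gt0.
have [dP dP_gt0 near_P] : exists2 dP, 0 < dP &
    forall t, `|t - 0| < dP -> `|Phi.[t] - Phi.[0]| < - Phi.[0].
  by apply: poly_cont; rewrite oppr_gt0.
set d := Num.min dX (Num.min dY dP).
have d_gt0 : 0 < d by rewrite !lt_min dX_gt0 dY_gt0 dP_gt0.
have [d_dX d_dY d_dP] : [/\ d <= dX, d <= dY & d <= dP] by rewrite !ge_min !lexx !orbT.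
have t_near : `|d / 2 - 0| < d by rewrite subr0 gtr0_norm ?divr_gt0 //; lra.
have := near_X _ (lt_le_trans t_near d_dX); rewrite X0 subr0 => X_t.
have := near_Y _ (lt_le_trans t_near d_dY); rewrite Y0 subr0 => Y_t.
have := near_P _ (lt_le_trans t_near d_dP) => P_t.
have Phi_t : Phi.[d / 2] < 0 by have := ler_norm (Phi.[d / 2] - Phi.[0]); lra.
have := min_e _ _ X_t Y_t; rewrite p00 p_curve ?divr_gt0 //.
by rewrite leNgt pmulr_rlt0 ?exprn_gt0 ?divr_gt0 ?Phi_t.
Qed.

Lemma not_local_min0_weighted_split p (x0 w0 : R) (P1 P2 : {poly R})
    (A1 A2 B1 B2 : nat) :
  ev p 0 0 = 0 -> (0 < A1)%N -> (0 < A2)%N -> (B1 < B2)%N ->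
  ('X - w0%:P) ^+ 2 %| P1 -> root P2 w0 -> P2^`().[w0] != 0 ->
  (forall t w,
     ev p (x0 * t ^+ A1) (w * t ^+ A2) = t ^+ B1 * P1.[w] + t ^+ B2 * P2.[w]) ->
  ~ local_min0 p.
Proof.
move=> p00 A1_gt0 A2_gt0 B12 /dvdpP[H1 P1_eq] /factor_theorem[H2 P2_eq] dP2 p_split.
have c_nz : H2.[w0] != 0.
  move: dP2; rewrite P2_eq horner_deriv_mul_root ?root_XsubC //.
  by rewrite derivXsubC hornerC mulr1.
set c := H2.[w0] in c_nz; set D := (B2 - B1)%N.
have norm_gt0 : 0 < `|H1.[w0]| + 1 by have := normr_ge0 H1.[w0]; lra.
set k := (`|H1.[w0]| + 1)^-1.
have k_gt0 : 0 < k by rewrite invr_gt0.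
have kH1 : H1.[w0] * k < 1.
  by rewrite ltr_pdivrMr // mul1r; have := ler_norm H1.[w0]; lra.
(* Along w = W.[t] the coefficient of t^(B1 + 2 D) is k c^2 (k H1.[w0] - 1) + o(1) < 0. *)
set W := w0%:P - (k * c) *: 'X^D.
have W0 : W.[0] = w0 by rewrite !hornerE expr0n subn_eq0 leqNgt B12 mulr0 subr0.
apply: (not_local_min0_curve (X := x0 *: 'X^A1) (Y := W * 'X^A2)
  (Phi := k *: (((k * c ^+ 2) *: H1 - c *: H2) \Po W)) (N := (B1 + 2 * D)%N) p00).
- by rewrite hornerZ hornerXn expr0n gtn_eqF ?mulr0.
- by rewrite hornerM hornerXn expr0n gtn_eqF ?mulr0.
- rewrite hornerZ horner_comp W0 hornerD hornerN !hornerZ -/c pmulr_rlt0 //.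
  have c2_gt0 : 0 < c ^+ 2 by rewrite exprn_even_gt0.
  rewrite -expr2 subr_lt0 -mulrA mulrCA -[X in _ < X]mulr1 ltr_pM2l //.
  by rewrite mulrC.
move=> t _.
have W_t : W.[t] = w0 - k * c * t ^+ D.
  by rewrite hornerD hornerN hornerC hornerZ hornerXn.
have tB2 : t ^+ B2 = t ^+ B1 * t ^+ D by rewrite -exprD subnKC // ltnW.
have tN : t ^+ (B1 + 2 * D) = t ^+ B1 * t ^+ D * t ^+ D.
  by rewrite -!exprD mul2n -addnn addnA.
rewrite hornerZ hornerXn hornerM hornerXn p_split P1_eq P2_eq hornerZ horner_comp W_t.
rewrite hornerM [(H2 * _).[_]]hornerM horner_exp !hornerXsubC hornerD hornerN.
rewrite !hornerZ tB2 tN.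
by move: (t ^+ B1) (t ^+ D) H1.[_] H2.[_] => a b h1 h2; ring.
Qed.

End NoLocalMinimum.

Theorem mainTheorem15 (R : realType) (p : {mpoly R[2]}) (A : nat * nat) (u0 : R) :
  p != 0 ->
  ev p 0 0 = 0 ->
  ev (mderiv ix p) 0 0 = 0 -> ev (mderiv iy p) 0 0 = 0 ->
  (forall A' : nat * nat, posvec A' ->
     (nterms (main_form A' p) = 1%N \/ nterms (main_form A' p) = 2%N) ->
     nonneg2 (main_form A' p) /\ nondeg_weak (main_form A' p)) ->
  in_calA p A ->
  size (Bs A p) = 2%N ->
  U p A u0 ->
  (2 <= mup u0 (g A 1 p))%N -> ~~ odd (mup u0 (g A 1 p)) ->
  mup u0 (g A 2 p) = 1%N ->
  ~ local_min0 p.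
Proof.
move=> _ p00 _ _ _ [/andP[/andP[A1_gt0 A2_gt0] coA] nt1 _ _].
move=> /Bs_size2[B1 [B2 [BsE B12 wdegB]]] + + _.
rewrite /nterms /U /g /phi BsE /= in nt1 *.
set f1 := qform A B1 p in nt1 *; set f2 := qform A B2 p.
move=> u0_root mup1 mup2.
have [f1_qh f2_qh] := (@qform_qhomog _ A B1 p, @qform_qhomog _ A B2 p).
have [ks ks_f1 ks_max] : exists2 ks, ks \in msupp f1 & \max_(k <- msupp f1) k ix = ks ix.
  by apply: eq_bigmax_seq; apply: contraTneq nt1 => ->.
have u0_nz : u0 != 0.
  apply: contraTneq u0_root => ->; rewrite /root.
  by rewrite (charpoly_horner0 coA A2_gt0 f1_qh ks_f1 ks_max) mcoeff_eq0 ks_f1.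
have [x0 [w0 [x0_sq u0_eq]]] := exists_sign_root coA A1_gt0 u0_nz.
have G1_nz : charpoly2 A f1 != 0 by apply: contraTneq mup1 => ->; rewrite mup0.
have G2_nz : charpoly2 A f2 != 0 by apply: contra_eq_neq mup2 => ->; rewrite mup0.
apply: (not_local_min0_weighted_split (P1 := slice A B1 f1 x0) (P2 := slice A B2 f2 x0)
  p00 A1_gt0 A2_gt0 B12).
- by apply: dvdp_slice u0_eq; rewrite -mup_geq.
- rewrite -dvdp_XsubCl -[_ - _]expr1; apply: dvdp_slice u0_eq.
  by rewrite -mup_geq ?mup2.
- exact: slice_deriv_neq0 mup2 u0_eq x0_sq u0_nz.
move=> t w; rewrite [in LHS](qform_split (A := A) (negbT (ltn_eqF B12)) wdegB) evD.
by rewrite !(ev_qhomog_scale _ _ _ f1_qh, ev_qhomog_scale _ _ _ f2_qh) !horner_slice.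
Qed.
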